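(* Let $\Gamma$ be a metric graph as described in the context, let $A\subset\Gamma$ be a closed set and let $f\colon A\to\mathbb{R}$ be bounded. Let $u^*_f$ be the convex envelope of $f$. Then $u^*_f$ is bounded on $\Gamma$ if and only if $A$ contains every terminal node of $\Gamma$. In this case, \[ \inf_A f\le u^*_f(x)\le \sup_A f\qquad\text{for all } x\in\Gamma. \]
   Context: $\Gamma$ is a metric graph: a finite, connected, simple graph with vertex set $\mathrm{V}$ and edge set $\mathrm{E}$ (each vertex has degree between $1$ and some finite bound), each edge $\mathrm{e}$ being identified with an interval $[0,\ell_{\mathrm{e}}]$ of positive length, endpoints identified with the two vertices of $\mathrm{e}$. $\Gamma$ is regarded as a connected compact metric space with the path distance $d(x,y)$ (length of a shortest path in $\Gamma$ from $x$ to $y$); it is assumed that for $x,y$ on the same edge, $d(x,y)=|x-y|$. For $x,y\in\Gamma$, $[x,y]$ denotes the minimal path between $x$ and $y$. The degree of a vertex is the number of edges incident to it; a vertex of degree $1$ is called terminal (exterior). A function $u\colon\Gamma\to\mathbb{R}$ is convex if for all $x,y\in\Gamma$ and all $z\in[x,y]$, $u(z)\le \frac{d(y,z)}{d(x,y)}u(x)+\frac{d(x,z)}{d(x,y)}u(y)$. The convex envelope of $f\colon A\to\mathbb{R}$ is $u^*_f(x)=\sup\{u(x): u\colon\Gamma\to\mathbb{R}\text{ convex},\ u\le f \text{ on } A\}$. *)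

From HB Require Import structures.
From mathcomp Require Import all_boot all_order all_algebra.
From mathcomp Require Import all_classical all_reals.
From mathcomp Require Import ereal.
Set Implicit Arguments. Unset Strict Implicit. Unset Printing Implicit Defensive.
Import Order.TTheory GRing.Theory Num.Theory.
Local Open Scope classical_set_scope.
Local Open Scope ring_scope.

(* A metric graph: finite simple connected graph on a finite vertex type,
   every vertex of degree >= 1 (finiteness gives the degree bound),
   with positive edge lengths. *)
Record mgraph (R : realType) := MGraph {
  mV : finType;
  madj : rel mV;
  mlen : mV -> mV -> R;
  madj_sym : symmetric madj;
  madj_irr : irreflexive madj;
  mlen_sym : forall u v, mlen u v = mlen v u;
  mlen_pos : forall u v, madj u v -> 0 < mlen u v;
  mconnected : forall u v, connect madj u v;
  mdeg_pos : forall v, exists w, madj v w }.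

Section MetricGraph.
Variables (R : realType) (G : mgraph R).
Local Notation V := (@mV R G).
Local Notation adj := (@madj R G).
Local Notation len := (@mlen R G).

(* raw points: a vertex, or a point of edge {u,v} at distance t from u *)
Inductive gpoint := GV of V | GE of V & V & R.

(* canonical representation: interior points of an edge {u,v} are written
   with u before v in the enumeration of V, and 0 < t < len u v *)
Definition gvalid (p : gpoint) : bool :=
  match p with
  | GV _ => true
  | GE u v t => [&& adj u v, (enum_rank u < enum_rank v)%N, 0 < t & t < len u v]
  end.

Definition gpt := {p : gpoint | gvalid p}.

Definition vpt (v : V) : gpt := exist _ (GV v) (erefl true).

Fixpoint wlen (u : V) (s : seq V) : R :=
  match s with [::] => 0 | w :: s' => len u w + wlen w s' end.

Definition dV (u w : V) : R :=
  inf [set l | exists s : seq V, [/\ path adj u s, last u s = w & l = wlen u s]].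

Definition anchors (p : gpoint) : seq (V * R) :=
  match p with
  | GV v => [:: (v, 0)]
  | GE u v t => [:: (u, t); (v, len u v - t)]
  end.

(* path distance: either leave through endpoints, or stay on the same edge *)
Definition gdist_raw (p q : gpoint) : R :=
  inf ([set l | exists a b, [/\ a \in anchors p, b \in anchors q &
                   l = a.2 + dV a.1 b.1 + b.2]] `|`
       [set l | exists u v t s, [/\ p = GE u v t, q = GE u v s & l = `|t - s|]]).

Definition gdist (x y : gpt) : R := gdist_raw (val x) (val y).

Definition on_edge (u v : V) (t : R) : gpoint :=
  if t == 0 then GV u else if t == len u v then GV v
  else if (enum_rank u < enum_rank v)%N then GE u v t else GE v u (len u v - t).

(* standing assumption: for x,y on the same edge, d(x,y) = |x - y| *)
Definition edge_isometric : Prop :=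
  forall u v t s, adj u v -> 0 <= t <= len u v -> 0 <= s <= len u v ->
    gdist_raw (on_edge u v t) (on_edge u v s) = `|t - s|.

(* z lies on a minimal path [x,y] *)
Definition in_segment (x y z : gpt) : Prop :=
  gdist x z + gdist z y = gdist x y.

Definition convex_fun (u : gpt -> R) : Prop :=
  forall x y z, x <> y -> in_segment x y z ->
    u z <= gdist y z / gdist x y * u x + gdist x z / gdist x y * u y.

Definition closed_set (A : set gpt) : Prop :=
  forall x, ~ A x -> exists2 r : R, 0 < r & forall y, gdist x y < r -> ~ A y.

Definition terminal (v : V) : Prop := #|[pred w | adj v w]| = 1%N.

(* convex envelope (extended-real valued, +oo if unbounded above) *)
Definition conv_env (A : set gpt) (f : gpt -> R) (x : gpt) : \bar R :=
  ereal_sup [set (u x)%:E | u in [set u : gpt -> R | convex_fun u /\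
                                   forall y, A y -> u y <= f y]].

End MetricGraph.

From HB Require Import structures.
From mathcomp Require Import all_boot all_order all_algebra.
From mathcomp Require Import all_classical all_reals.
From mathcomp Require Import ereal.
From mathcomp Require Import lra.
Import Order.TTheory GRing.Theory Num.Theory.
Set Implicit Arguments. Unset Strict Implicit.
Local Open Scope classical_set_scope.
Local Open Scope ring_scope.

(* The constant [inf f] is a convex minorant, which gives the lower bound.
   A convex function is convex along each edge, so its maximum over the graph is
   attained at a vertex; at a non-terminal vertex [v] the maximum spreads along
   every incident edge, because [v] is the midpoint of a geodesic joining points
   on two different edges.  By connectedness the maximum of a convex minorant is
   attained at a terminal vertex or everywhere, hence on [A], so the envelope is
   at most [sup f].  Conversely, the distance to a terminal vertex [v] is affine
   along geodesics through its pendant edge, so if [v] lies outside the closed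
   set [A], a steep tent [B + K max(0, d - d(x, v))] supported in a ball missing
   [A] is a convex minorant taking arbitrarily large values at [v]. *)

Section RealFacts.
Variable R : realType.

Lemma inf_ge0 (S : set R) : (forall x, S x -> 0 <= x) -> 0 <= inf S.
Proof.
move=> S_ge0; have [[x Sx]|/set0P/negP/negPn/eqP ->] := pselect (S !=set0).
  by apply: lb_le_inf S_ge0; exists x.
by rewrite inf0.
Qed.

Lemma inf_le_ge0 (S : set R) x : (forall y, S y -> 0 <= y) -> S x -> inf S <= x.
Proof. by move=> S_ge0 Sx; apply: (ge_inf _ Sx); exists 0 => y /S_ge0. Qed.

Lemma between_interp (a b s : R) : `|a - s| + `|b - s| = `|a - b| ->
  `|a - b| * s = `|b - s| * a + `|a - s| * b.
Proof.
have normE (x : R) : (`|x| = x /\ 0 <= x) \/ (`|x| = - x /\ x < 0).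
  by case: (ltrP x 0) => x0; [right; rewrite ltr0_norm | left; rewrite ger0_norm].
by case: (normE (a - s)) => [[-> ?]|[-> ?]]; case: (normE (b - s)) => [[-> ?]|[-> ?]];
  case: (normE (a - b)) => [[-> ?]|[-> ?]] => *; nra.
Qed.

Lemma ler_comb_pdiv (D a b x y z : R) : 0 < D ->
  (z <= a / D * x + b / D * y) = (D * z <= a * x + b * y).
Proof.
move=> D0; rewrite mulrAC [b / D * y]mulrAC -mulrDl ler_pdivlMr //.
by rewrite mulrC.
Qed.

Lemma abse_le_bounds (a b : R) (y : \bar R) :
  (a%:E <= y <= b%:E)%E -> (`|y| <= (`|a| + `|b|)%:E)%E.
Proof.
case: y => [c| |] /andP[]; rewrite ?leey_eq ?leeNy_eq //= !lee_fin => ac cb.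
have := ler_norm (- a); have := ler_norm b; rewrite normrN => ? ?.
have := normr_ge0 a; have := normr_ge0 b.
by rewrite ler_norml => ? ?; apply/andP; split; lra.
Qed.

End RealFacts.

Lemma last_rev_belast (T : Type) (x : T) s : last (last x s) (rev (belast x s)) = x.
Proof. by case: s => [|y s] //=; rewrite rev_cons last_rcons. Qed.

Section VertexDistance.
Variables (R : realType) (G : mgraph R).
Local Notation V := (mV G).
Local Notation adj := (@madj R G).
Local Notation len := (@mlen R G).

Lemma wlen_ge0 (u : V) s : path adj u s -> 0 <= wlen u s.
Proof.
elim: s u => [|w s IHs] u //= /andP[uw ws].
by rewrite addr_ge0 ?IHs // ltW ?mlen_pos.
Qed.

Lemma wlen_cat (u : V) s1 s2 : wlen u (s1 ++ s2) = wlen u s1 + wlen (last u s1) s2.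
Proof. by elim: s1 u => [|w s IHs] u /=; rewrite ?add0r // IHs addrA. Qed.

Lemma wlen_rcons (u : V) s w : wlen u (rcons s w) = wlen u s + len (last u s) w.
Proof. by rewrite -cats1 wlen_cat /= addr0. Qed.

Lemma wlen_rev (u : V) s : wlen (last u s) (rev (belast u s)) = wlen u s.
Proof.
elim: s u => [|w s IHs] u //=.
by rewrite rev_cons wlen_rcons IHs last_rev_belast mlen_sym addrC.
Qed.

Lemma dV_le_wlen (u w : V) s : path adj u s -> last u s = w -> dV u w <= wlen u s.
Proof.
move=> us sw; apply: inf_le_ge0; last by exists s.
by move=> _ [s' [us' _ ->]]; exact: wlen_ge0.
Qed.

Lemma le_dV (u w : V) m :
  (forall s, path adj u s -> last u s = w -> m <= wlen u s) -> m <= dV u w.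
Proof.
move=> le_m; apply: lb_le_inf; last by move=> _ [s [us sw ->]]; exact: le_m.
by have /connectP[s us sw] := mconnected u w; exists (wlen u s), s.
Qed.

Lemma dV_ge0 (u w : V) : 0 <= dV u w.
Proof. by apply: inf_ge0 => _ [s [us _ ->]]; exact: wlen_ge0. Qed.

Lemma dVxx (u : V) : dV u u = 0.
Proof. by apply: le_anti; rewrite dV_ge0 andbT (@dV_le_wlen u u [::]). Qed.

Lemma dV_triangle (a w b : V) : dV a b <= dV a w + dV w b.
Proof.
rewrite -lerBlDr; apply: le_dV => s1 p1 l1.
rewrite lerBlDl -lerBlDr; apply: le_dV => s2 p2 l2.
rewrite lerBlDr addrC -l1 -wlen_cat; apply: dV_le_wlen; first by rewrite cat_path p1 l1.
by rewrite last_cat l1.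
Qed.

Lemma dVC (a b : V) : dV a b = dV b a.
Proof.
suff le_dVC (x y : V) : dV y x <= dV x y by apply: le_anti; rewrite !le_dVC.
apply: le_dV => s p l; rewrite -wlen_rev -l; apply: dV_le_wlen.
  have adjC : (fun z => adj^~ z) =2 adj by move=> ? ? /=; exact: madj_sym.
  by rewrite rev_path (eq_path adjC).
exact: last_rev_belast.
Qed.

Lemma dV_pendant (v w a : V) : adj v w -> (forall w', adj v w' -> w' = w) -> a != v ->
  dV a v = dV a w + len v w.
Proof.
move=> vw pend av; apply: le_anti; apply/andP; split.
  rewrite -lerBlDr; apply: le_dV => s p l.
  rewrite lerBlDr (mlen_sym v w) -l -wlen_rcons.
  by apply: dV_le_wlen; rewrite ?last_rcons // rcons_path p l madj_sym.
apply: le_dV => s; case/lastP: s => [|s y] /=; first by move=> _ ay; rewrite ay eqxx in av.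
rewrite rcons_path last_rcons => /andP[p lv] yv; subst y.
have lw : last a s = w by apply: pend; rewrite madj_sym.
by rewrite wlen_rcons lw mlen_sym lerD2r dV_le_wlen.
Qed.

Definition min_len : R := \big[Num.min/1]_(e : V * V | adj e.1 e.2) len e.1 e.2.

Lemma min_len_gt0 : 0 < min_len.
Proof. by apply/bigmin_gtP; split=> // e /mlen_pos. Qed.

Lemma min_len_le_dV (a b : V) : a != b -> min_len <= dV a b.
Proof.
move=> ab; apply: le_dV => -[|x s] /= p l; first by rewrite l eqxx in ab.
case/andP: p => ax p; rewrite -[min_len]addr0 lerD ?wlen_ge0 //.
exact: (@bigmin_le_cond _ _ _ _ (a, x)).
Qed.

End VertexDistance.

Section PointDistance.
Variables (R : realType) (G : mgraph R).
Local Notation V := (mV G).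
Local Notation adj := (@madj R G).
Local Notation len := (@mlen R G).
Local Notation gpoint := (gpoint G).

Definition gdist_cand (p q : gpoint) : set R :=
  [set l | exists a b, [/\ a \in anchors p, b \in anchors q & l = a.2 + dV a.1 b.1 + b.2]] `|`
  [set l | exists u v t s, [/\ p = GE u v t, q = GE u v s & l = `|t - s|]].

Lemma anchors_ge0 (p : gpoint) a : gvalid p -> a \in anchors p -> 0 <= a.2.
Proof.
case: p => [x|x y t] /=; first by move=> _; rewrite inE => /eqP ->.
by case/and4P => _ _ t0 tl; rewrite !inE => /orP[] /eqP -> /=; lra.
Qed.

Lemma anchors_GV (x : V) (a : V * R) : a \in anchors (GV x : gpoint) -> a = (x, 0).
Proof. by rewrite inE => /eqP. Qed.

Lemma anchors_neq0 (p : gpoint) : exists a, a \in anchors p.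
Proof. by case: p => [x|x y t]; eexists; exact: mem_head. Qed.

Lemma gdist_cand_ge0 (p q : gpoint) : gvalid p -> gvalid q ->
  forall l, gdist_cand p q l -> 0 <= l.
Proof.
move=> vp vq l [[a [b [pa qb ->]]] | [u [v [t [s [_ _ ->]]]]]] //.
by rewrite !addr_ge0 ?dV_ge0 ?(anchors_ge0 vp pa) ?(anchors_ge0 vq qb).
Qed.

Lemma gdist_le_anchors (p q : gpoint) (a b : V * R) : gvalid p -> gvalid q ->
  a \in anchors p -> b \in anchors q -> gdist_raw p q <= a.2 + dV a.1 b.1 + b.2.
Proof.
by move=> vp vq pa qb; apply: inf_le_ge0 (gdist_cand_ge0 vp vq) _; left; exists a, b.
Qed.

Lemma gdist_le_edge (u v : V) t s : gvalid (GE u v t) -> gvalid (GE u v s) ->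
  gdist_raw (GE u v t) (GE u v s) <= `|t - s|.
Proof.
by move=> vp vq; apply: inf_le_ge0 (gdist_cand_ge0 vp vq) _; right; exists u, v, t, s.
Qed.

Lemma le_gdist (p q : gpoint) m :
  (forall a b, a \in anchors p -> b \in anchors q -> m <= a.2 + dV a.1 b.1 + b.2) ->
  (forall u v t s, p = GE u v t -> q = GE u v s -> m <= `|t - s|) ->
  m <= gdist_raw p q.
Proof.
move=> le_anch le_edge; apply: lb_le_inf.
  have [a pa] := anchors_neq0 p; have [b qb] := anchors_neq0 q.
  by exists (a.2 + dV a.1 b.1 + b.2); left; exists a, b.
move=> _ [[a [b [pa qb ->]]] | [u [v [t [s [pt qs ->]]]]]]; first exact: le_anch.
exact: le_edge pt qs.
Qed.

Lemma gdistC (x y : gpt G) : gdist x y = gdist y x.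
Proof.
suff le_gdistC (p q : gpoint) : gvalid p -> gvalid q -> gdist_raw q p <= gdist_raw p q.
  by apply: le_anti; rewrite !le_gdistC ?(valP x) ?(valP y).
move=> vp vq; apply: le_gdist => [a b pa qb|u v t s ep eq].
  by have := gdist_le_anchors vq vp qb pa; rewrite dVC; lra.
by subst p q; rewrite distrC; apply: gdist_le_edge.
Qed.

Lemma gdist_ge0 (x y : gpt G) : 0 <= gdist x y.
Proof. exact: inf_ge0 (gdist_cand_ge0 (valP x) (valP y)). Qed.

Lemma gdist_triangle_vertex (x y : gpt G) (w : V) :
  gdist x y <= gdist x (vpt w) + gdist (vpt w) y.
Proof.
have vx := valP x; have vy := valP y; rewrite /gdist /=.
rewrite -lerBlDr; apply: le_gdist => [a b xa /anchors_GV -> /=|? ? ? ? _ //].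
rewrite lerBlDl -lerBlDr; apply: le_gdist => [c d /anchors_GV -> yd /=|? ? ? ? //].
have := gdist_le_anchors vx vy xa yd; have := dV_triangle a.1 w d.1; lra.
Qed.

(* For [p <> q], every candidate length of [gdist_raw p q] is at least [min_len],
   [end_gap p], [end_gap q] or [edge_gap p q]. *)
Definition end_gap (p : gpoint) : R :=
  if p is GE u v t then Num.min t (len u v - t) else 1.

Definition edge_gap (p q : gpoint) : R :=
  match p, q with
  | GE u v t, GE u' v' s => if (u == u') && (v == v') then `|t - s| else 1
  | _, _ => 1
  end.

Lemma end_gap_gt0 (p : gpoint) : gvalid p -> 0 < end_gap p.
Proof.
case: p => [x|x y t] /=; first by rewrite ltr01.
by case/and4P => _ _ t0 tl; rewrite lt_min t0 subr_gt0 tl.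
Qed.

Lemma edge_gap_gt0 (p q : gpoint) : p <> q -> 0 < edge_gap p q.
Proof.
case: p => [x|x y t]; case: q => [x'|x' y' s] //= pq; rewrite ?ltr01 //.
case: ifP => [/andP[/eqP ex /eqP ey]|_]; last by rewrite ltr01.
by subst; rewrite normr_gt0 subr_eq0; apply/eqP => ts; apply: pq; rewrite ts.
Qed.

Lemma end_gap_le_anchor (p : gpoint) (a : V * R) : a \in anchors p ->
  end_gap p <= a.2 \/ exists x, p = GV x.
Proof.
case: p => [x|x y t] /=; first by right; exists x.
by rewrite !inE => /orP[] /eqP -> /=; left; rewrite ge_min lexx ?orbT.
Qed.

Lemma gdist_gt0 (x y : gpt G) : x <> y -> 0 < gdist x y.
Proof.
move=> xy; have {}xy : val x <> val y by move/val_inj.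
move: (valP x) (valP y) xy; rewrite /gdist; move: (val x) (val y) => p q vp vq pq.
pose c := Num.min (min_len G) (Num.min (end_gap p) (Num.min (end_gap q) (edge_gap p q))).
have c_gt0 : 0 < c.
  by rewrite !lt_min min_len_gt0 !end_gap_gt0 ?edge_gap_gt0.
have [c1 c2 c3 c4] : [/\ c <= min_len G, c <= end_gap p, c <= end_gap q & c <= edge_gap p q].
  by rewrite !ge_min !lexx !orbT.
apply: lt_le_trans c_gt0 _; apply: le_gdist => [a b pa qb|u v t s ep eq]; last first.
  by move: c4; rewrite ep eq /= !eqxx.
have a2 := anchors_ge0 vp pa; have b2 := anchors_ge0 vq qb; have := dV_ge0 a.1 b.1.
have [ab|ab] := eqVneq a.1 b.1; last by have := min_len_le_dV ab; lra.
case: (end_gap_le_anchor pa) => [|[z pz]]; first lra.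
case: (end_gap_le_anchor qb) => [|[z' qz]]; first lra.
move: pa qb ab; rewrite pz qz => /anchors_GV -> /anchors_GV -> /= zz.
by case: pq; rewrite pz qz zz.
Qed.

End PointDistance.

Section EdgePoints.
Variables (R : realType) (G : mgraph R).
Local Notation V := (mV G).
Local Notation adj := (@madj R G).
Local Notation len := (@mlen R G).
Local Notation gpoint := (gpoint G).

Lemma enum_rank_adj (u v : V) : adj u v -> ~~ (enum_rank u < enum_rank v)%N ->
  (enum_rank v < enum_rank u)%N.
Proof.
move=> uv; rewrite -leqNgt leq_eqVlt => /orP[/eqP/val_inj/enum_rank_inj vu|//].
by rewrite vu madj_irr in uv.
Qed.

Lemma on_edge_valid (u v : V) t : adj u v -> 0 <= t <= len u v -> gvalid (on_edge u v t).
Proof.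
move=> uv /andP[t0 tl]; rewrite /on_edge.
case: eqP => // /eqP t_neq0; case: eqP => // /eqP t_neql.
have t_gt0 : 0 < t by rewrite lt_neqAle eq_sym t_neq0 t0.
have t_ltl : t < len u v by rewrite lt_neqAle t_neql tl.
case: ifP => ruv /=; first by rewrite uv ruv t_gt0 t_ltl.
rewrite madj_sym uv (enum_rank_adj uv (negbT ruv)) (mlen_sym v u) /=.
by rewrite subr_gt0 t_ltl ltrBlDr ltrDl t_gt0.
Qed.

(* Junk value [vpt u] when [t] is outside [0, len u v]. *)
Definition pt (u v : V) (t : R) : gpt G := insubd (vpt u) (on_edge u v t).

Lemma val_pt (u v : V) t : adj u v -> 0 <= t <= len u v -> val (pt u v t) = on_edge u v t.
Proof. by move=> uv ut; rewrite /pt insubdK //; exact: on_edge_valid. Qed.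

Lemma pt0 (u v : V) : adj u v -> pt u v 0 = vpt u.
Proof.
move=> uv; have l_gt0 := mlen_pos uv.
by apply: val_inj; rewrite val_pt ?lexx ?ltW //= /on_edge eqxx.
Qed.

Lemma pt_len (u v : V) : adj u v -> pt u v (len u v) = vpt v.
Proof.
move=> uv; have l_gt0 := mlen_pos uv.
by apply: val_inj; rewrite val_pt ?lexx ?ltW // /on_edge gt_eqF // eqxx.
Qed.

Lemma pt_GE (x : gpt G) (a b : V) t : val x = GE a b t -> x = pt a b t.
Proof.
move=> xE; have := valP x; rewrite xE /= => /and4P[ab r t0 tl].
by apply: val_inj; rewrite xE val_pt ?ltW // /on_edge gt_eqF // lt_eqF // r.
Qed.

Lemma gpt_on_edge (x : gpt G) :
  exists a b t, [/\ adj a b, 0 <= t <= len a b & x = pt a b t].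
Proof.
case Ex: (val x) => [a|a b t].
  have [b ab] := mdeg_pos a; exists a, b, 0.
  by rewrite lexx ltW ?mlen_pos // pt0 //; split=> //; apply: val_inj.
have := valP x; rewrite Ex => /and4P[ab _ t0 tl].
by exists a, b, t; rewrite !ltW // (pt_GE Ex).
Qed.

Lemma anchors_on_edge (u v : V) t (b : V * R) : 0 <= t <= len u v ->
  b \in anchors (on_edge u v t) -> b = (u, t) \/ b = (v, len u v - t).
Proof.
rewrite /on_edge; case: eqP => [-> _ /anchors_GV ->|_]; first by left.
case: eqP => [-> _ /anchors_GV ->|_ _]; first by right; rewrite subrr.
case: ifP => _ /=; rewrite !inE => /orP[] /eqP ->; auto.
by left; rewrite (mlen_sym v u) subKr.
Qed.

Lemma anchor_first (u v : V) t : 0 <= t < len u v -> (u, t) \in anchors (on_edge u v t).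
Proof.
move=> /andP[t0 tl]; rewrite /on_edge.
case: eqP => [->|_]; first exact: mem_head.
rewrite lt_eqF //; case: ifP => _ /=; rewrite !inE ?eqxx //.
by rewrite (mlen_sym v u) subKr eqxx orbT.
Qed.

Lemma anchor_second (u v : V) t : 0 < t <= len u v ->
  (v, len u v - t) \in anchors (on_edge u v t).
Proof.
move=> /andP[t0 tl]; rewrite /on_edge gt_eqF //.
case: eqP => [->|_]; first by rewrite subrr mem_head.
by case: ifP => _ /=; rewrite !inE ?eqxx ?orbT.
Qed.

Lemma on_edge_GE (u v : V) t (x y : V) s : on_edge u v t = GE x y s ->
  (x = u /\ y = v) \/ (x = v /\ y = u).
Proof.
rewrite /on_edge; case: eqP => _ //; case: eqP => _ //.
by case: ifP => _ [<- <- _]; auto.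
Qed.

Lemma gdist_pt_opposite (v w1 w2 : V) e : adj v w1 -> adj v w2 -> w1 != w2 -> 0 < e ->
  2 * e <= len v w1 -> 2 * e <= len v w2 -> gdist (pt v w1 e) (pt v w2 e) = 2 * e.
Proof.
move=> vw1 vw2 w12 e_gt0 l1 l2.
have r1 : 0 <= e < len v w1 by apply/andP; split; lra.
have r2 : 0 <= e < len v w2 by apply/andP; split; lra.
have r1' : 0 <= e <= len v w1 by rewrite (ltW e_gt0) ltW //; case/andP: r1.
have r2' : 0 <= e <= len v w2 by rewrite (ltW e_gt0) ltW //; case/andP: r2.
rewrite /gdist !val_pt //; apply: le_anti; apply/andP; split.
  have := gdist_le_anchors (on_edge_valid vw1 r1') (on_edge_valid vw2 r2')
    (anchor_first r1) (anchor_first r2).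
  by rewrite /= dVxx addr0 mulr2n mulrDl !mul1r.
apply: le_gdist => [a b /(anchors_on_edge r1') + /(anchors_on_edge r2')|].
  have := dV_ge0 v w2; have := dV_ge0 w1 v; have := dV_ge0 w1 w2.
  by move=> ? ? ? [] -> [] -> /=; rewrite ?dVxx; lra.
move=> x y t s /on_edge_GE + /on_edge_GE.
by case=> -[-> ->] [] [ex ey]; move: w12 vw1 vw2; rewrite -?ex -?ey ?eqxx ?madj_irr.
Qed.

Lemma terminalP (v : V) : terminal v -> exists2 w, adj v w & forall w', adj v w' -> w' = w.
Proof.
move=> /eqP/card1P[w vw]; exists w; first by have := vw w; rewrite !inE eqxx.
by move=> w' vw'; have := vw w'; rewrite !inE vw' => /esym/eqP.
Qed.

Lemma nonterminal_neighbor (v w : V) : ~ terminal v -> adj v w ->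
  exists2 w', adj v w' & w' != w.
Proof.
move=> nt vw; apply: contrapT => no_w'; apply: nt; apply/eqP/card1P; exists w => w'.
rewrite !inE; have [->|w'w] := eqVneq w' w; first by rewrite vw.
by apply/negbTE/negP => vw'; apply: no_w'; exists w'.
Qed.

End EdgePoints.

Section PendantEdge.
Variables (R : realType) (G : mgraph R) (v w : mV G).
Local Notation adj := (@madj R G).
Local Notation len := (@mlen R G).
Hypotheses (vw : adj v w) (v_pendant : forall w', adj v w' -> w' = w).

Definition outside (x : gpt G) := forall a, a \in anchors (val x) -> a.1 != v.

Lemma pendant_edge_or_outside (x : gpt G) :
  (exists2 s, 0 <= s <= len v w & x = pt v w s) \/ outside x.
Proof.
have l_gt0 := mlen_pos vw.
case: x => -[a|a b t] vx.
  have [->|av] := eqVneq a v; last by right => c /anchors_GV ->.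
  by left; exists 0; rewrite ?lexx ?ltW // pt0 //; apply: val_inj.
have /and4P[ab r t0 tl] := vx.
have [ea|av] := eqVneq a v.
  subst a; have eb := v_pendant ab; subst b.
  by left; exists t; rewrite ?ltW //; apply: pt_GE.
have [eb|bv] := eqVneq b v; last by right => c; rewrite !inE => /orP[] /eqP -> /=.
subst b; have ea : a = w by apply: v_pendant; rewrite madj_sym.
subst a; rewrite (mlen_sym w v) in tl.
have wt : 0 <= len v w - t <= len v w by rewrite subr_ge0 !ltW // ltrBlDr ltrDl.
left; exists (len v w - t) => //; apply: val_inj; rewrite val_pt // /on_edge.
rewrite gt_eqF ?subr_gt0 // lt_eqF ?ltrBlDr ?ltrDl //.
by rewrite ifF ?subKr //; apply/negbTE; rewrite -leqNgt ltnW.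
Qed.

Lemma gdist_outside_pendant (x : gpt G) s : outside x -> 0 <= s <= len v w ->
  gdist x (pt v w s) = gdist x (vpt w) + len v w - s.
Proof.
move=> out ws; have l_gt0 := mlen_pos vw; have vx := valP x.
have vs := on_edge_valid vw ws; move: ws => /andP[s0 sl].
rewrite /gdist val_pt ?s0 //=.
have dv a : a \in anchors (val x) -> dV a.1 v = dV a.1 w + len v w.
  by move=> xa; exact: dV_pendant vw v_pendant (out a xa).
apply: le_anti; apply/andP; split.
  rewrite -addrA -lerBlDr; apply: le_gdist => [a b xa /anchors_GV -> /=|? ? ? ? _ //].
  have := dv a xa; have [s_eq0|s_neq0] := eqVneq s 0.
    subst s; have l0 : (0 : R) <= 0 < len v w by rewrite lexx l_gt0.
    by have := gdist_le_anchors vx vs xa (anchor_first l0); rewrite /=; lra.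
  have s_pos : 0 < s <= len v w by rewrite lt_neqAle eq_sym s_neq0 s0 sl.
  by have := gdist_le_anchors vx vs xa (anchor_second s_pos); rewrite /=; lra.
apply: le_gdist => [a b xa|u u' t t' xE /on_edge_GE uu'].
  have := gdist_le_anchors vx (isT : gvalid (GV w)) xa (mem_head _ _).
  have := dv a xa; have := anchors_ge0 vx xa; rewrite /= => ? ? ?.
  by case/(anchors_on_edge (_ : 0 <= s <= len v w)); rewrite ?s0 ?sl // => -> /=; lra.
have vu : v \in [:: u; u'] by case: uu' => -[-> ->]; rewrite !inE eqxx ?orbT.
change (val x = GE u u' t) in xE.
have := out (u, t); have := out (u', len u u' - t); rewrite xE !inE !eqxx ?orbT.
move=> /(_ isT) u'v /(_ isT) uv.
by move: vu; rewrite !inE eq_sym (negbTE uv) eq_sym (negbTE u'v).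
Qed.

End PendantEdge.

Section ConvexFunctions.
Variables (R : realType) (G : mgraph R).
Local Notation V := (mV G).
Local Notation adj := (@madj R G).
Local Notation len := (@mlen R G).
Hypothesis edge_iso : edge_isometric G.

Lemma gdist_pt (u v : V) t s : adj u v -> 0 <= t <= len u v ->
  0 <= s <= len u v -> gdist (pt u v t) (pt u v s) = `|t - s|.
Proof. by move=> uv ut us; rewrite /gdist !val_pt //; exact: edge_iso. Qed.

Lemma gdist_pt_vpt (u v : V) t : adj u v -> 0 <= t <= len u v ->
  gdist (pt u v t) (vpt u) = t.
Proof.
move=> uv /andP[t0 tl]; rewrite -(pt0 uv) gdist_pt ?subr0 ?ger0_norm ?t0 ?tl //.
by rewrite lexx ltW ?mlen_pos.
Qed.

Lemma gdistxx (x : gpt G) : gdist x x = 0.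
Proof.
by have [a [b [t [ab abt ->]]]] := gpt_on_edge x; rewrite gdist_pt // subrr normr0.
Qed.

Lemma pt_inj (a b : V) t s : adj a b -> 0 <= t <= len a b -> 0 <= s <= len a b ->
  pt a b t = pt a b s -> t = s.
Proof.
move=> ab abt abs ts; apply/eqP; rewrite -subr_eq0 -normr_eq0.
by rewrite -(gdist_pt ab abt abs) ts gdistxx.
Qed.

Lemma in_segment_edge (a b : V) t s r : adj a b -> 0 <= t -> t <= s -> s <= r ->
  r <= len a b -> in_segment (pt a b t) (pt a b r) (pt a b s).
Proof.
move=> ab t0 ts sr rl.
have on_ab p : t <= p <= r -> 0 <= p <= len a b.
  by case/andP=> tp pr; rewrite (le_trans t0 tp) (le_trans pr rl).
rewrite /in_segment !gdist_pt ?on_ab ?lexx ?ts ?sr ?(le_trans ts sr) //.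
by rewrite !ler0_norm ?subr_le0 ?(le_trans ts sr) //; lra.
Qed.

Lemma in_segment_sum (x y z : gpt G) :
  in_segment x y z -> gdist y z + gdist x z = gdist x y.
Proof. by rewrite /in_segment addrC (gdistC y z). Qed.

Lemma convex_fun_cst (c : R) : convex_fun (fun _ : gpt G => c).
Proof.
move=> x y z xy /in_segment_sum xyz; rewrite ler_comb_pdiv ?gdist_gt0 //.
by rewrite -mulrDl xyz.
Qed.

Lemma convex_fun_affine (g : gpt G -> R) (c K : R) : 0 <= K -> convex_fun g ->
  convex_fun (fun x => c + K * g x).
Proof.
move=> K0 g_cvx x y z xy xyz; have := g_cvx x y z xy xyz.
move/in_segment_sum: xyz; rewrite !ler_comb_pdiv ?gdist_gt0 // => xyz gz.
rewrite mulrDr -{1}xyz mulrDl !mulrDr addrACA lerD2l mulrCA.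
by rewrite [_ * (K * _)]mulrCA [_ * (K * g y)]mulrCA -mulrDr ler_wpM2l.
Qed.

Section MaximumPrinciple.
Variable u : gpt G -> R.
Hypothesis u_cvx : convex_fun u.

Lemma convex_on_edge (a b : V) t1 s t2 : adj a b -> 0 <= t1 -> t1 <= s -> s <= t2 ->
  t2 <= len a b -> t1 < t2 ->
  (t2 - t1) * u (pt a b s) <= (t2 - s) * u (pt a b t1) + (s - t1) * u (pt a b t2).
Proof.
move=> ab t0 ts st tl t12.
have on_ab p : t1 <= p <= t2 -> 0 <= p <= len a b.
  by case/andP=> tp pr; rewrite (le_trans t0 tp) (le_trans pr tl).
have [r1 rs r2] : [/\ 0 <= t1 <= len a b, 0 <= s <= len a b & 0 <= t2 <= len a b].
  by rewrite !on_ab ?lexx ?ts ?st ?ltW.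
have ne : pt a b t1 <> pt a b t2 by move/(pt_inj ab r1 r2)/eqP; rewrite lt_eqF.
have := u_cvx ne (in_segment_edge ab t0 ts st tl).
rewrite ler_comb_pdiv ?gdist_gt0 // !gdist_pt //.
have := ltW t12; rewrite [`|t1 - s|]distrC [`|t1 - t2|]distrC => t12'.
by rewrite !ger0_norm ?subr_ge0.
Qed.

Lemma convex_edge_le_max (a b : V) t : adj a b -> 0 <= t <= len a b ->
  u (pt a b t) <= Num.max (u (vpt a)) (u (vpt b)).
Proof.
move=> ab /andP[t0 tl]; have l_gt0 := mlen_pos ab.
have := convex_on_edge ab (lexx 0) t0 tl (lexx _) l_gt0.
rewrite pt0 // pt_len // !subr0 => cvx.
have [ua ub] : u (vpt a) <= Num.max (u (vpt a)) (u (vpt b)) /\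
    u (vpt b) <= Num.max (u (vpt a)) (u (vpt b)) by rewrite !le_max !lexx orbT.
have lt_ge0 : 0 <= len a b - t by rewrite subr_ge0.
have := ler_wpM2l lt_ge0 ua; have := ler_wpM2l t0 ub => tb ta.
by rewrite -(ler_pM2l l_gt0); lra.
Qed.

Lemma convex_vertex_max (i0 : V) : exists v0, forall x, u x <= u (vpt v0).
Proof.
have [v0 _ v0_max] := @arg_maxP _ _ _ i0 predT (fun v => u (vpt v)) isT.
exists v0 => x; have [a [b [t [ab abt ->]]]] := gpt_on_edge x.
apply: le_trans (convex_edge_le_max ab abt) _.
by rewrite ge_max; apply/andP; split; apply: v0_max.
Qed.

Section AtMaximum.
Variables (M : R) (v : V).
Hypotheses (u_le : forall x, u x <= M) (uv : u (vpt v) = M).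

Lemma convex_max_near_vertex (w1 w2 : V) e : adj v w1 -> adj v w2 -> w1 != w2 ->
  0 < e -> 2 * e <= len v w1 -> 2 * e <= len v w2 -> u (pt v w1 e) = M.
Proof.
move=> vw1 vw2 w12 e_gt0 l1 l2.
have [r1 r2] : 0 <= e <= len v w1 /\ 0 <= e <= len v w2.
  by split; apply/andP; split; lra.
have ne : pt v w1 e <> pt v w2 e.
  by move=> E; have := gdist_pt_opposite vw1 vw2 w12 e_gt0 l1 l2; rewrite E gdistxx; lra.
have mid : in_segment (pt v w1 e) (pt v w2 e) (vpt v).
  rewrite /in_segment gdist_pt_vpt // gdistC gdist_pt_vpt //.
  by rewrite gdist_pt_opposite //; lra.
have := u_cvx ne mid; rewrite ler_comb_pdiv ?gdist_gt0 //.
rewrite gdist_pt_opposite // !gdist_pt_vpt // uv => cvx.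
have := ler_wpM2l (ltW e_gt0) (u_le (pt v w2 e)) => eu2.
by apply: le_anti; rewrite u_le /= -(ler_pM2l e_gt0); lra.
Qed.

Lemma convex_max_spreads (w : V) t : ~ terminal v -> adj v w -> 0 <= t <= len v w ->
  u (pt v w t) = M.
Proof.
move=> nt vw /andP[t0 tl]; have [->|t_neq0] := eqVneq t 0; first by rewrite pt0.
have t_gt0 : 0 < t by rewrite lt_neqAle eq_sym t_neq0.
have [w2 vw2 w2w] := nonterminal_neighbor nt vw.
have l2 := mlen_pos vw2.
pose m := Num.min t (len v w2).
have m_gt0 : 0 < m by rewrite lt_min t_gt0 l2.
have [mt ml2] : m <= t /\ m <= len v w2 by rewrite !ge_min !lexx orbT.
pose e := m / 2.
have [e_gt0 e2t el2] : [/\ 0 < e, 2 * e <= t & 2 * e <= len v w2] by split; rewrite /e; lra.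
have ue : u (pt v w e) = M.
  by apply: (convex_max_near_vertex vw vw2); rewrite 1?eq_sym //; lra.
have et : e <= t by lra.
have := convex_on_edge vw (lexx 0) (ltW e_gt0) et tl t_gt0.
rewrite pt0 // uv ue !subr0 => cvx.
by apply: le_anti; rewrite u_le /= -(ler_pM2l e_gt0); lra.
Qed.

End AtMaximum.

Lemma convex_maximum_principle (A : set (gpt G)) : A !=set0 ->
  (forall v, terminal v -> A (vpt v)) -> forall x, exists2 y, A y & u x <= u y.
Proof.
move=> [y0 Ay0] A_term x.
have [[i0 _] _] := anchors_neq0 (val y0).
have [v0 v0_max] := convex_vertex_max i0.
have [[v [tv uv]]|no_term] := pselect (exists v, terminal v /\ u (vpt v) = u (vpt v0)).
  by exists (vpt v); [exact: A_term | rewrite uv v0_max].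
have spread a b : u (vpt a) = u (vpt v0) -> adj a b -> u (vpt b) = u (vpt v0).
  move=> ua ab; rewrite -(pt_len ab).
  apply: (convex_max_spreads v0_max ua) => //.
    by move=> ta; apply: no_term; exists a.
  by rewrite lexx ltW ?mlen_pos.
have path_max p c : u (vpt c) = u (vpt v0) -> path adj c p ->
    u (vpt (last c p)) = u (vpt v0).
  by elim: p c => [|b p IHp] c //= uc /andP[/(spread c b uc) ub /(IHp b ub)].
have all_max a : u (vpt a) = u (vpt v0).
  by have /connectP[p p_path ->] := mconnected v0 a; exact: path_max.
exists y0 => //; have [a [b [t [ab abt ->]]]] := gpt_on_edge y0.
rewrite (convex_max_spreads v0_max (all_max a)) // => ta.
by apply: no_term; exists a.
Qed.

End MaximumPrinciple.

Section PendantTent.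
Variables (v w : V).
Hypotheses (vw : adj v w) (v_pendant : forall w', adj v w' -> w' = w).

Lemma gdist_pendant (x : gpt G) s : 0 <= s <= len v w ->
  gdist x (pt v w s) = `|gdist x (vpt v) - s|.
Proof.
move=> ws; have l0 : (0 : R) <= 0 <= len v w by rewrite lexx ltW ?mlen_pos.
case: (pendant_edge_or_outside vw v_pendant x) => [[a wa ->]|out].
  by rewrite gdist_pt // gdist_pt_vpt.
rewrite gdist_outside_pendant // -(pt0 vw) gdist_outside_pendant // subr0.
rewrite ger0_norm // subr_ge0; have := gdist_ge0 x (vpt w).
by case/andP: ws; lra.
Qed.

Lemma pendant_in_segment (x y : gpt G) s : 0 <= s < len v w ->
  in_segment x y (pt v w s) -> gdist x y = `|gdist x (vpt v) - gdist y (vpt v)|.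
Proof.
move=> /andP[s0 sl]; have ws : 0 <= s <= len v w by rewrite s0 ltW.
case: (pendant_edge_or_outside vw v_pendant x) => [[a wa ->] _|out_x].
  by rewrite gdistC gdist_pendant // gdist_pt_vpt // distrC.
case: (pendant_edge_or_outside vw v_pendant y) => [[b wb ->] _|out_y].
  by rewrite gdist_pendant // gdist_pt_vpt.
rewrite /in_segment [gdist (pt v w s) y]gdistC !gdist_outside_pendant // => seg.
exfalso; have := gdist_triangle_vertex x y w; rewrite [gdist (vpt w) y]gdistC; lra.
Qed.

Lemma gdist_pendant_affine (x y : gpt G) s : 0 <= s < len v w ->
  in_segment x y (pt v w s) ->
  gdist x y * s = gdist y (pt v w s) * gdist x (vpt v) + gdist x (pt v w s) * gdist y (vpt v).
Proof.
move=> ws xyz; have ws' : 0 <= s <= len v w by case/andP: ws => -> /ltW ->.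
move: (in_segment_sum xyz); rewrite (pendant_in_segment ws xyz) !gdist_pendant //.
by rewrite addrC; exact: between_interp.
Qed.

Definition tent (d : R) (x : gpt G) : R := Num.max 0 (d - gdist x (vpt v)).

Lemma tent_ge0 d x : 0 <= tent d x.
Proof. by rewrite le_max lexx. Qed.

Lemma tent_ge d x : d - gdist x (vpt v) <= tent d x.
Proof. by rewrite le_max lexx orbT. Qed.

Lemma convex_tent d : d <= len v w -> convex_fun (tent d).
Proof.
move=> dl x y z xy xyz; rewrite ler_comb_pdiv ?gdist_gt0 //.
have [z_out|z_in] := lerP (d - gdist z (vpt v)) 0.
  by rewrite /tent (max_idPl z_out) mulr0 addr_ge0 // mulr_ge0 ?gdist_ge0 ?tent_ge0.
have l0 : (0 : R) <= 0 <= len v w by rewrite lexx ltW ?mlen_pos.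
have [s ws zE] : exists2 s, 0 <= s < len v w & z = pt v w s.
  move: z_in; case: (pendant_edge_or_outside vw v_pendant z) => [[s ws ->]|out].
    rewrite gdist_pt_vpt // => ds; exists s => //.
    by apply/andP; split; [case/andP: ws | apply: lt_le_trans dl; lra].
  rewrite -(pt0 vw) gdist_outside_pendant // subr0 => dz; exfalso.
  by have := gdist_ge0 z (vpt w); lra.
subst z; have ws' : 0 <= s <= len v w by case/andP: ws => s0 sl; rewrite s0 ltW.
move: z_in; rewrite /tent gdist_pt_vpt // => /ltW/max_idPr ->.
have := in_segment_sum xyz; have := gdist_pendant_affine ws xyz.
have := ler_wpM2l (gdist_ge0 y (pt v w s)) (tent_ge d x).
have := ler_wpM2l (gdist_ge0 x (pt v w s)) (tent_ge d y); rewrite /tent; nra.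
Qed.

End PendantTent.

End ConvexFunctions.

Section ConvexEnvelope.
Variables (R : realType) (G : mgraph R) (A : set (gpt G)) (f : gpt G -> R).
Hypothesis edge_iso : edge_isometric G.

Lemma conv_env_ge_inf (x : gpt G) :
  has_lbound (f @` A) -> ((inf (f @` A))%:E <= conv_env A f x)%E.
Proof.
move=> f_lb; apply: ereal_sup_ubound; exists (fun _ => inf (f @` A)) => //.
split=> [|y Ay]; first exact: convex_fun_cst.
by apply: (ge_inf f_lb); exists y.
Qed.

Lemma conv_env_le_sup (x : gpt G) : A !=set0 -> has_ubound (f @` A) ->
  (forall v, terminal v -> A (vpt v)) -> (conv_env A f x <= (sup (f @` A))%:E)%E.
Proof.
move=> A_neq0 f_ub A_term; apply: ge_ereal_sup => _ [u [u_cvx u_le] <-].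
have [y Ay uxy] := convex_maximum_principle edge_iso u_cvx A_neq0 A_term x.
rewrite lee_fin (le_trans uxy) // (le_trans (u_le y Ay)) //.
by apply: (ub_le_sup f_ub); exists y.
Qed.

Lemma conv_env_unbounded_terminal (v : mV G) (M : R) : closed_set A ->
  has_lbound (f @` A) -> terminal v -> ~ A (vpt v) -> (M%:E <= conv_env A f (vpt v))%E.
Proof.
move=> A_closed [B f_lb] tv vA.
have [r r_gt0 ball_vA] := A_closed _ vA.
have [w vw v_pendant] := terminalP tv.
pose d := Num.min r (mlen v w).
have d_gt0 : 0 < d by rewrite lt_min r_gt0 mlen_pos.
have [dr dl] : d <= r /\ d <= mlen v w by rewrite !ge_min !lexx orbT.
pose K := Num.max 0 ((M - B) / d).
have K_ge0 : 0 <= K by rewrite le_max lexx.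
have KdM : M - B <= K * d by rewrite -ler_pdivrMr // le_max lexx orbT.
apply: (@le_trans _ _ (B + K * tent v d (vpt v))%:E).
  by rewrite lee_fin /tent gdistxx // subr0 (max_idPr (ltW d_gt0)); lra.
apply: ereal_sup_ubound; exists (fun x => B + K * tent v d x) => //.
split=> [|y Ay]; first exact/convex_fun_affine/(convex_tent edge_iso vw v_pendant dl).
have [tent0|tent_gt0] := lerP (d - gdist y (vpt v)) 0.
  by rewrite /tent (max_idPl tent0) mulr0 addr0; apply: f_lb; exists y.
by exfalso; apply: (ball_vA y) => //; rewrite gdistC; lra.
Qed.

End ConvexEnvelope.

Unset Implicit Arguments.

Theorem theorem1p1 (R : realType) (G : mgraph R) (A : set (gpt G))
    (f : gpt G -> R) :
  edge_isometric G ->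
  closed_set A -> A !=set0 ->
  (exists M : R, forall x, A x -> `|f x| <= M) ->
  ((exists M : R, forall x, (`|conv_env A f x| <= M%:E)%E) <->
     (forall v : mV G, terminal v -> A (vpt v))) /\
  ((forall v : mV G, terminal v -> A (vpt v)) ->
     forall x, ((inf (f @` A))%:E <= conv_env A f x <= (sup (f @` A))%:E)%E).
Proof.
move=> edge_iso A_closed A_neq0 [B f_bounded].
have f_lb : has_lbound (f @` A).
  by exists (- B) => _ [y /f_bounded + <-]; rewrite ler_norml => /andP[].
have f_ub : has_ubound (f @` A).
  by exists B => _ [y /f_bounded + <-]; rewrite ler_norml => /andP[].
have bounds (A_term : forall v, terminal v -> A (vpt v)) x :
    ((inf (f @` A))%:E <= conv_env A f x <= (sup (f @` A))%:E)%E.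
  by apply/andP; split; [exact: conv_env_ge_inf | apply: conv_env_le_sup].
split=> //; split=> [[M env_le] v tv|A_term].
  apply: contrapT => vA.
  have := conv_env_unbounded_terminal edge_iso (M + 1) A_closed f_lb tv vA.
  move=> /le_trans/(_ (le_trans (lee_abs _) (env_le (vpt v)))).
  by rewrite lee_fin; lra.
by exists (`|inf (f @` A)| + `|sup (f @` A)|) => x; apply: abse_le_bounds; exact: bounds.
Qed.
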